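(* Let $n\ge 2$, let $F_n$ be the free group on $x_1,\dots,x_n$, let $PW_n$ be the welded pure braid (McCool) group with generators $\xi_{i,j}$ ($1\le i\neq j\le n$), and let $F_n\rtimes PW_n$ be the semidirect product described in the context. For $1\le i\neq j\le n$ let $M_{i,j}$ be the $n\times n$ matrix over the group algebra $\mathbb{C}[F_n\rtimes PW_n]$ which equals the identity matrix except in its $i$-th row, whose $(i,i)$ entry is $x_j$, whose $(i,j)$ entry is $1-x_jx_ix_j^{-1}$, and whose other entries are $0$; and let $\mathcal{C}(\xi_{i,j})=\xi_{i,j}\cdot M_{i,j}$ be the matrix obtained by left-multiplying every entry of $M_{i,j}$ by $\xi_{i,j}$. Then the assignment $\xi_{i,j}\mapsto\mathcal{C}(\xi_{i,j})$ determines a faithful (injective) matrix representation $\Psi_n:PW_n\to GL(n,\mathbb{C}[F_n\rtimes PW_n])$.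
   Context: The group $PW_n$ is given by generators $\xi_{i,j}$, $1\le i\neq j\le n$, subject to the McCool relations: $[\xi_{i,j},\xi_{s,t}]=1$ if $\{i,j\}\cap\{s,t\}=\emptyset$; $[\xi_{i,j},\xi_{k,j}]=1$ for $i,j,k$ distinct; $[\xi_{i,j}\xi_{k,j},\xi_{i,k}]=1$ for $i,j,k$ distinct, where $[a,b]=a^{-1}b^{-1}ab$. (Equivalently, $PW_n$ is the kernel of the map from the welded braid group $WB_n$ to the symmetric group sending $\sigma_i,\tau_i\mapsto\tau_i$.) For each generator, let $\varphi_{i,j}$ be the automorphism of $F_n$ with $\varphi_{i,j}(x_i)=x_jx_ix_j^{-1}$ and $\varphi_{i,j}(x_k)=x_k$ for $k\neq i$. The semidirect product $F_n\rtimes PW_n$ is the group generated by $F_n$ and $PW_n$, containing $F_n$ as a normal subgroup with $(F_n\rtimes PW_n)/F_n\cong PW_n$, in which $\xi_{i,j}^{-1}\,x_k\,\xi_{i,j}=\varphi_{i,j}(x_k)$ for all $k$ (this is the semidirect product coming from the faithful Artin embedding of $PW_n$ into $\mathrm{Aut}(F_n)$). Matrices are multiplied in the usual way over the noncommutative ring $\mathbb{C}[F_n\rtimes PW_n]$. *)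

From HB Require Import structures.
From mathcomp Require Import all_boot all_order all_algebra.
From mathcomp Require Import boolp Rstruct complex.

Set Implicit Arguments.
Unset Strict Implicit.
Unset Printing Implicit Defensive.

Import GRing.Theory.
Local Open Scope ring_scope.

Notation CC := (Rdefinitions.R[i]).

(* A word over an alphabet A is a list of letters (a, b); (a, false)    *)
(* stands for the generator a and (a, true) for its inverse a^-1.       *)
Definition word (A : Type) := seq (A * bool).

Definition inv_letter (A : Type) (l : A * bool) : A * bool := (l.1, ~~ l.2).
Definition inv_word (A : Type) (w : word A) : word A := rev (map (@inv_letter A) w).
Definition gen_word (A : Type) (a : A) : word A := [:: (a, false)].

Definition comm_word (A : Type) (a b : word A) : word A :=
  inv_word a ++ inv_word b ++ a ++ b.

(* grp_eq rel u v : u and v represent the same element of the group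
   < A | r = 1 (rel r) >, i.e. the congruence on the free monoid over
   A x bool generated by free cancellation and the relators. *)
Inductive grp_eq (A : Type) (rel : word A -> Prop) : word A -> word A -> Prop :=
| ge_refl w : grp_eq rel w w
| ge_sym u v : grp_eq rel u v -> grp_eq rel v u
| ge_trans u v w : grp_eq rel u v -> grp_eq rel v w -> grp_eq rel u w
| ge_ctx a b u v : grp_eq rel u v -> grp_eq rel (a ++ u ++ b) (a ++ v ++ b)
| ge_cancel l : grp_eq rel [:: l; inv_letter l] [::]
| ge_rel r : rel r -> grp_eq rel r [::].

(* generators xi_{i,j}, 1 <= i <> j <= n (indices shifted to 'I_n) *)
Definition pwgen (n : nat) := {p : 'I_n * 'I_n | p.1 != p.2}.

(* the one-letter word xi_{i,j} (the empty word if i = j, never used) *)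
Definition xiw (n : nat) (i j : 'I_n) : word (pwgen n) :=
  match insub (i, j) with Some g => gen_word g | None => [::] end.

Definition mccool_rel (n : nat) (r : word (pwgen n)) : Prop :=
  (exists i j s t : 'I_n,
     [&& i != j, s != t, i != s, i != t, j != s & j != t] /\
     r = comm_word (xiw i j) (xiw s t)) \/
  (exists i j k : 'I_n,
     [&& i != j, j != k & i != k] /\
     r = comm_word (xiw i j) (xiw k j)) \/
  (exists i j k : 'I_n,
     [&& i != j, j != k & i != k] /\
     r = comm_word (xiw i j ++ xiw k j) (xiw i k)).

Definition PW_eq (n : nat) : word (pwgen n) -> word (pwgen n) -> Prop :=
  grp_eq (@mccool_rel n).

(* The semidirect product G = F_n x| PW_n, presented by the generators  *)
(* x_k of F_n and xi_{i,j} of PW_n, the McCool relations, and the       *)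
(* relations xi_{i,j}^-1 x_k xi_{i,j} = phi_{i,j}(x_k).                 *)
Inductive sdgen (n : nat) : Type :=
| SX of 'I_n
| SXi of pwgen n.

Definition xw (n : nat) (k : 'I_n) : word (sdgen n) := gen_word (SX k).

Definition lift_pw (n : nat) (w : word (pwgen n)) : word (sdgen n) :=
  map (fun l => (SXi l.1, l.2)) w.

Definition phiw (n : nat) (i j k : 'I_n) : word (sdgen n) :=
  if k == i then xw j ++ xw i ++ inv_word (xw j) else xw k.

Definition sd_rel (n : nat) (r : word (sdgen n)) : Prop :=
  (exists r0, mccool_rel r0 /\ r = lift_pw r0) \/
  (exists i j k : 'I_n, i != j /\
     r = inv_word (lift_pw (xiw i j)) ++ xw k ++ lift_pw (xiw i j)
           ++ inv_word (phiw i j k)).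

Definition G_eq (n : nat) : word (sdgen n) -> word (sdgen n) -> Prop :=
  grp_eq (@sd_rel n).

(* The group algebra C[G]: an element is a finite formal sum            *)
(* sum_p c_p g_p, represented by a list of pairs (c_p, g_p) with g_p a  *)
(* word representing an element of G; two formal sums are equal in C[G] *)
(* iff they have the same coefficient at every element of G.            *)
Definition CG (n : nat) := seq (CC * word (sdgen n)).

Definition cg_coef (n : nat) (a : CG n) (g : word (sdgen n)) : CC :=
  \sum_(p <- a | `[< G_eq p.2 g >]) p.1.

Definition cg_eq (n : nat) (a b : CG n) : Prop :=
  forall g : word (sdgen n), cg_coef a g = cg_coef b g.

Definition cg_zero (n : nat) : CG n := [::].
Definition cg_add (n : nat) (a b : CG n) : CG n := a ++ b.
Definition cg_mul (n : nat) (a b : CG n) : CG n :=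
  [seq (p.1 * q.1, p.2 ++ q.2) | p <- a, q <- b].
Definition cg_of (n : nat) (g : word (sdgen n)) : CG n := [:: (1, g)].
Definition cg_scal (n : nat) (c : CC) : CG n := [:: (c, [::])].

Definition cmx (n : nat) := 'M[CG n]_n.

Definition cmx_eq (n : nat) (A B : cmx n) : Prop :=
  forall i j, cg_eq (A i j) (B i j).

Definition cmx_mul (n : nat) (A B : cmx n) : cmx n :=
  \matrix_(i, k) foldr (@cg_add n) (cg_zero n)
                   [seq cg_mul (A i j) (B j k) | j <- enum 'I_n].

Definition cmx_one (n : nat) : cmx n :=
  \matrix_(i, j) if i == j then cg_scal n 1 else cg_zero n.

Definition Mmx (n : nat) (i j : 'I_n) : cmx n :=
  \matrix_(r, c)
    if r == i then
      (if c == i then cg_of (xw j)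
       else if c == j then
         cg_add (cg_scal n 1) (cg_mul (cg_scal n (-1)) (cg_of (xw j ++ xw i ++ inv_word (xw j))))
       else cg_zero n)
    else (if r == c then cg_scal n 1 else cg_zero n).

Definition Cmx (n : nat) (g : pwgen n) : cmx n :=
  let i := (val g).1 in let j := (val g).2 in
  \matrix_(r, c) cg_mul (cg_of (lift_pw (gen_word g))) (Mmx i j r c).

(* Given a choice Dinv g of inverse for each C(g), the image of a word
   of PW_n under xi |-> C(xi), xi^-1 |-> Dinv xi. *)
Fixpoint Psi_word (n : nat) (Dinv : pwgen n -> cmx n) (w : word (pwgen n)) : cmx n :=
  match w with
  | [::] => cmx_one n
  | l :: w' => cmx_mul (if l.2 then Dinv l.1 else Cmx l.1) (Psi_word Dinv w')
  end.

(* Let G = F_n x| PW_n. Matrices over C[G] act on vectors of functions G -> C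
   through the left regular representation, and two matrices are equal in
   M_n(C[G]) iff they act alike on all such vectors (test against delta
   functions). An identity between products of the C(xi) and their explicit
   inverses M^-1 xi^-1 therefore reduces to a finite computation: evaluate at
   the identity, push the letters xi^-1 to the right through F_n using
   xi^-1 x_k xi = phi(x_k), free-reduce, and match the remaining PW_n-parts by
   a McCool relation.
   For faithfulness, restrict to functions that factor through G -> PW_n: on
   them the F_n-terms in row i of C(xi) cancel, so C(xi) is right translation
   by xi^-1. Hence Psi(u) sends the indicator y of the class of u^-1 to
   y(u^-1 _), which is 1 at the identity; if Psi(u) = Psi(v) that value is
   also y(v^-1), so v^-1 = u^-1 in PW_n. *)

From mathcomp Require Import all_boot all_order all_algebra.
From mathcomp Require Import boolp Rstruct complex.
From mathcomp Require Import zify ring.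

Set Implicit Arguments.
Unset Strict Implicit.
Unset Printing Implicit Defensive.

Import GRing.Theory.
Local Open Scope ring_scope.

Section Words.
Variable A : Type.

Lemma inv_letterK : involutive (@inv_letter A).
Proof. by case=> a b; rewrite /inv_letter /= negbK. Qed.

Lemma inv_word_cat (u v : word A) : inv_word (u ++ v) = inv_word v ++ inv_word u.
Proof. by rewrite /inv_word map_cat rev_cat. Qed.

Lemma inv_word_cons (l : A * bool) (u : word A) :
  inv_word (l :: u) = inv_word u ++ [:: inv_letter l].
Proof. by rewrite -cat1s inv_word_cat. Qed.

Lemma inv_wordK : involutive (@inv_word A).
Proof.
move=> u; rewrite /inv_word map_rev revK -map_comp.
by rewrite (@eq_map _ _ _ id) ?map_id // => l /=; rewrite inv_letterK.
Qed.

End Words.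

Section PresentedGroup.
Variables (A : Type) (rel : word A -> Prop).
Local Notation "u ≈ v" := (grp_eq rel u v) (at level 70).

Lemma ge_catl w u v : u ≈ v -> w ++ u ≈ w ++ v.
Proof. by move=> h; have := ge_ctx w [::] h; rewrite !cats0. Qed.

Lemma ge_catr w u v : u ≈ v -> u ++ w ≈ v ++ w.
Proof. exact: (ge_ctx [::] w). Qed.

Lemma ge_cons l u v : u ≈ v -> l :: u ≈ l :: v.
Proof. exact: (ge_catl [:: l]). Qed.

Lemma ge_cancel_mid a b l : a ++ l :: inv_letter l :: b ≈ a ++ b.
Proof. exact: (ge_ctx a b (ge_cancel rel l)). Qed.

Lemma ge_mulV w : w ++ inv_word w ≈ [::].
Proof.
elim: w => [|l w IH] /=; first exact: ge_refl.
rewrite inv_word_cons catA -cat_cons.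
apply: ge_trans (ge_catr _ (ge_cons l IH)) _; exact: ge_cancel.
Qed.

Lemma ge_Vmul w : inv_word w ++ w ≈ [::].
Proof. by have := ge_mulV (inv_word w); rewrite inv_wordK. Qed.

Lemma ge_inv u v : u ≈ v -> inv_word u ≈ inv_word v.
Proof.
elim=> {u v} [w | u v _ | u v w _ h1 _ h2 | a b u v _ h | l | r hr].
- exact: ge_refl.
- exact: ge_sym.
- exact: ge_trans h1 h2.
- by rewrite !inv_word_cat; apply: ge_catr; apply: ge_catl.
- by rewrite /inv_word /= inv_letterK; apply: ge_cancel.
- have := ge_catl (inv_word r) (ge_sym (ge_rel hr)); rewrite cats0 => h.
  exact: ge_trans h (ge_Vmul r).
Qed.

Lemma ge_invI u v : inv_word u ≈ inv_word v -> u ≈ v.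
Proof. by move/ge_inv; rewrite !inv_wordK. Qed.

Lemma ge_eq_mulV u v : u ++ inv_word v ≈ [::] -> u ≈ v.
Proof.
move=> h; have := ge_catl u (ge_sym (ge_Vmul v)); rewrite cats0 => h1.
by apply: ge_trans h1 _; rewrite catA; exact: (ge_catr v h).
Qed.

Lemma ge_Vmul_eq u v : inv_word u ++ v ≈ [::] <-> u ≈ v.
Proof.
split=> h; last exact: ge_trans (ge_catl _ (ge_sym h)) (ge_Vmul _).
have := ge_catl u (ge_sym h); rewrite cats0 catA => h1.
by apply: ge_trans h1 _; apply: (ge_catr v (ge_mulV u)).
Qed.

End PresentedGroup.

Section GroupAlgebraAction.
Variable n : nat.
Local Notation W := (word (sdgen n)).

Definition G_invariant (f : W -> CC) := forall u v, G_eq u v -> f u = f v.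

Definition G_invariant_vec (x : 'I_n -> W -> CC) := forall c, G_invariant (x c).

Definition cg_act (a : CG n) (f : W -> CC) (h : W) : CC :=
  \sum_(p <- a) p.1 * f (inv_word p.2 ++ h).

Definition cmx_act (A : cmx n) (x : 'I_n -> W -> CC) (r : 'I_n) (h : W) : CC :=
  \sum_(c < n) cg_act (A r c) (x c) h.

Lemma cg_act_add a b f h : cg_act (cg_add a b) f h = cg_act a f h + cg_act b f h.
Proof. exact: big_cat. Qed.

Lemma cg_act0 f h : cg_act (cg_zero n) f h = 0.
Proof. exact: big_nil. Qed.

Lemma cg_actM a b f h : cg_act (cg_mul a b) f h = cg_act a (cg_act b f) h.
Proof.
rewrite /cg_act /cg_mul big_allpairs_dep; apply: eq_bigr => p _.
rewrite big_distrr; apply: eq_bigr => q _ /=.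
by rewrite inv_word_cat -catA mulrA.
Qed.

Lemma cg_act_of w f h : cg_act (cg_of w) f h = f (inv_word w ++ h).
Proof. by rewrite /cg_act big_seq1 mul1r. Qed.

Lemma cg_act_scal c f h : cg_act (cg_scal n c) f h = c * f h.
Proof. by rewrite /cg_act big_seq1. Qed.

Lemma eq_cg_act a f f' : f =1 f' -> cg_act a f =1 cg_act a f'.
Proof. by move=> ff' h; apply: eq_bigr => p _; rewrite ff'. Qed.

Lemma cg_act_sum a (F : 'I_n -> W -> CC) h :
  cg_act a (fun w => \sum_(c < n) F c w) h = \sum_(c < n) cg_act a (F c) h.
Proof. by rewrite /cg_act exchange_big; apply: eq_bigr => p _; rewrite big_distrr. Qed.

Lemma cg_act_foldr (I : Type) (s : seq I) (F : I -> CG n) f h :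
  cg_act (foldr (@cg_add n) (cg_zero n) [seq F j | j <- s]) f h =
  \sum_(j <- s) cg_act (F j) f h.
Proof.
elim: s => [|j s IH]; first by rewrite big_nil cg_act0.
by rewrite /= cg_act_add IH big_cons.
Qed.

Lemma cmx_actM A B x : cmx_act (cmx_mul A B) x = cmx_act A (cmx_act B x).
Proof.
apply/funext => r; apply/funext => h; rewrite /cmx_act.
under eq_bigr => c _ do rewrite mxE cg_act_foldr big_enum.
rewrite exchange_big; apply: eq_bigr => j _.
by rewrite cg_act_sum; apply: eq_bigr => c _; rewrite cg_actM.
Qed.

Lemma cmx_act1 x : cmx_act (cmx_one n) x = x.
Proof.
apply/funext => r; apply/funext => h.
rewrite /cmx_act (bigD1 r) //= mxE eqxx cg_act_scal mul1r big1 ?addr0 // => c rc.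
by rewrite mxE eq_sym (negbTE rc) cg_act0.
Qed.

Lemma eq_cmx_act A x y : (forall c, x c =1 y c) -> cmx_act A x = cmx_act A y.
Proof.
move=> xy; apply/funext => r; apply/funext => h.
by apply: eq_bigr => c _; apply: eq_cg_act.
Qed.

Lemma cg_act_invariant a f : G_invariant f -> G_invariant (cg_act a f).
Proof.
move=> finv u v uv; apply: eq_bigr => p _; congr (_ * _).
by apply: finv; apply: ge_catl.
Qed.

Lemma cmx_act_invariant A x : G_invariant_vec x -> G_invariant_vec (cmx_act A x).
Proof.
by move=> xinv r u v uv; apply: eq_bigr => c _; apply: cg_act_invariant.
Qed.

Lemma cg_coef_filter (s : CG n) h g :
  cg_coef [seq p <- s | ~~ `[< G_eq p.2 h >]] g =
  if `[< G_eq g h >] then 0 else cg_coef s g.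
Proof.
rewrite /cg_coef big_filter_cond.
case: (boolP `[< G_eq g h >]) => /asboolP gh.
  rewrite big_pred0 // => p; apply/negbTE; rewrite negb_and negbK.
  case: (boolP `[< G_eq p.2 g >]) => /asboolP pg; rewrite ?orbT //.
  by rewrite orbF; apply/asboolP; apply: ge_trans pg gh.
apply: eq_bigl => p; case: (boolP `[< G_eq p.2 g >]) => /asboolP pg; last first.
  by rewrite andbF.
rewrite andbT; apply/negP => /asboolP ph; apply: gh.
exact: ge_trans (ge_sym pg) ph.
Qed.

Lemma sum_cg_split (F : W -> CC) (s : CG n) h : G_invariant F ->
  \sum_(p <- s) p.1 * F p.2 =
  cg_coef s h * F h + \sum_(p <- [seq p <- s | ~~ `[< G_eq p.2 h >]]) p.1 * F p.2.
Proof.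
move=> Finv; rewrite (bigID (fun p => `[< G_eq p.2 h >])) big_filter; congr (_ + _).
by rewrite big_distrl; apply: eq_bigr => p /asboolP ph; rewrite (Finv _ _ ph).
Qed.

(* Induction on the total length: splitting off the class of the first
   element shortens both sums without changing their coefficients elsewhere. *)
Lemma sum_cg_eq (F : W -> CC) (a b : CG n) : G_invariant F -> cg_eq a b ->
  \sum_(p <- a) p.1 * F p.2 = \sum_(p <- b) p.1 * F p.2.
Proof.
move=> Finv; move: {2}(size a + size b)%N (leqnn (size a + size b)) => N.
elim: N a b => [|N IH] a b.
  by rewrite leqn0 addn_eq0 => /andP[/nilP -> /nilP ->].
case ab: (a ++ b) => [|p0 s0] sz eq_ab.
  by case: a b ab {sz eq_ab} => [|? ?] [|? ?].
pose P (p : CC * W) := `[< G_eq p.2 p0.2 >].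
rewrite (sum_cg_split _ p0.2 Finv) (sum_cg_split b p0.2 Finv) eq_ab; congr (_ + _).
apply: IH; last by move=> g; rewrite !cg_coef_filter eq_ab.
have P_p0 : (0 < count P a + count P b)%N.
  by rewrite -count_cat ab /= /P asboolT //; apply: ge_refl.
rewrite !size_filter; change (count (predC P) a + count (predC P) b <= N)%N.
have := count_predC P a; have := count_predC P b; lia.
Qed.

Lemma cg_eq_act a b f h : cg_eq a b -> G_invariant f -> cg_act a f h = cg_act b f h.
Proof.
move=> eq_ab finv; apply: (sum_cg_eq (F := fun w => f (inv_word w ++ h))) => // u v uv.
by apply: finv; apply: ge_catr; apply: ge_inv.
Qed.

Definition delta (w : W) : CC := if `[< G_eq w [::] >] then 1 else 0.

Lemma delta_invariant : G_invariant delta.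
Proof.
move=> u v uv; rewrite /delta; congr (if _ then _ else _).
by apply/asboolP/asboolP => h; [exact: ge_trans (ge_sym uv) h | exact: ge_trans uv h].
Qed.

Lemma cg_coef_act a g : cg_coef a g = cg_act a delta g.
Proof.
rewrite /cg_coef /cg_act big_mkcond; apply: eq_bigr => p _.
rewrite /delta; have -> : `[< G_eq (inv_word p.2 ++ g) [::] >] = `[< G_eq p.2 g >].
  by apply/asboolP/asboolP => /ge_Vmul_eq.
by case: ifP; rewrite ?mulr1 ?mulr0.
Qed.

(* Testing against [delta] in column c recovers the coefficients of [A r c]. *)
Lemma cmx_eqP (A B : cmx n) :
  cmx_eq A B <-> forall x, G_invariant_vec x -> cmx_act A x = cmx_act B x.
Proof.
split=> [eq_AB x xinv | act_AB r c g].
  apply/funext => r; apply/funext => h; apply: eq_bigr => c _.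
  by apply: cg_eq_act; [apply: eq_AB | apply: xinv].
pose x c' w := if c' == c then delta w else 0.
have xinv : G_invariant_vec x.
  by move=> c' u v uv; rewrite /x; case: eqP => // _; apply: delta_invariant.
have act_x M : cmx_act M x r g = cg_act (M r c) delta g.
  rewrite /cmx_act (bigD1 c) //= big1 ?addr0.
    by apply: eq_cg_act => w; rewrite /x eqxx.
  by move=> c' c'c; apply: big1 => p _; rewrite /x (negbTE c'c) mulr0.
by rewrite !cg_coef_act -!act_x (act_AB x xinv).
Qed.

End GroupAlgebraAction.

Lemma neq_eqF (T : eqType) (a b : T) : a != b -> ((a == b) = false) * ((b == a) = false).
Proof. by move=> ab; rewrite (negbTE ab) eq_sym (negbTE ab). Qed.

Section Generators.
Variable n : nat.
Local Notation W := (word (sdgen n)).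

Definition xi (i j : 'I_n) (ij : i != j) : pwgen n :=
  exist (fun p : 'I_n * 'I_n => p.1 != p.2) (i, j) ij.

Lemma xiw_xi (i j : 'I_n) (ij : i != j) : xiw i j = gen_word (xi ij).
Proof. by rewrite /xiw insubT. Qed.

(* C(xi_{i,j})^-1 = M_{i,j}^-1 xi_{i,j}^-1, where M_{i,j}^-1 differs from the
   identity only in row i, with entries x_j^-1 at (i,i) and
   x_i x_j^-1 - x_j^-1 at (i,j). *)
Definition Cmx_inv (i j : 'I_n) (ij : i != j) : cmx n :=
  \matrix_(r, c) cg_mul
    (if r == i then
       if c == i then cg_of (inv_word (xw j))
       else if c == j then
         cg_add (cg_mul (cg_scal n (-1)) (cg_of (inv_word (xw j))))
                (cg_of (xw i ++ inv_word (xw j)))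
       else cg_zero n
     else if r == c then cg_scal n 1 else cg_zero n)
    (cg_of [:: (SXi (xi ij), true)]).

Lemma cmx_act_Cmx (i j : 'I_n) (ij : i != j) x r h :
  cmx_act (Cmx (xi ij)) x r h =
  if r == i then
    x i ((SX j, true) :: (SXi (xi ij), true) :: h) + x j ((SXi (xi ij), true) :: h)
    - x j [:: (SX j, false), (SX i, true), (SX j, true), (SXi (xi ij), true) & h]
  else x r ((SXi (xi ij), true) :: h).
Proof.
have neq := neq_eqF ij.
rewrite /cmx_act; under eq_bigr => c _ do rewrite mxE cg_actM cg_act_of /Mmx mxE.
case: (eqVneq r i) => [_|ri].
  rewrite (bigD1 i) // (bigD1 j) /= ?neq // big1 => [|c /andP[ci cj]].
    by rewrite !eqxx /cg_act /= !big_cons !big_nil /=; ring.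
  by rewrite (negbTE ci) (negbTE cj) cg_act0.
rewrite (bigD1 r) //= big1 => [|c cr].
  by rewrite eqxx cg_act_scal mul1r addr0.
by rewrite eq_sym (negbTE cr) cg_act0.
Qed.

Lemma cmx_act_Cmx_inv (i j : 'I_n) (ij : i != j) x r h :
  cmx_act (Cmx_inv ij) x r h =
  if r == i then
    x i [:: (SXi (xi ij), false), (SX j, false) & h]
    - x j [:: (SXi (xi ij), false), (SX j, false) & h]
    + x j [:: (SXi (xi ij), false), (SX j, false), (SX i, true) & h]
  else x r ((SXi (xi ij), false) :: h).
Proof.
have neq := neq_eqF ij.
rewrite /cmx_act; under eq_bigr => c _ do rewrite mxE cg_actM (eq_cg_act _ (cg_act_of _ _)).
case: (eqVneq r i) => [_|ri].
  rewrite (bigD1 i) // (bigD1 j) /= ?neq // big1 => [|c /andP[ci cj]].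
    by rewrite !eqxx /cg_act /= !big_cons !big_nil /=; ring.
  by rewrite (negbTE ci) (negbTE cj) cg_act0.
rewrite (bigD1 r) //= big1 => [|c cr].
  by rewrite eqxx cg_act_scal mul1r addr0.
by rewrite eq_sym (negbTE cr) cg_act0.
Qed.

Lemma cmx_act_shift (A : cmx n) x r h :
  cmx_act A x r h = cmx_act A (fun c u => x c (u ++ h)) r [::].
Proof. by apply: eq_bigr => c _; apply: eq_bigr => p _; rewrite cats0. Qed.

(* Invariant vectors are stable under right translation by any h, so it is
   enough to compare the two actions at the identity. *)
Lemma cmx_eq_at1 (A B : cmx n) :
  (forall x, G_invariant_vec x -> forall r, cmx_act A x r [::] = cmx_act B x r [::]) ->
  cmx_eq A B.
Proof.
move=> AB; apply/cmx_eqP => x xinv; apply/funext => r; apply/funext => h.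
rewrite !(cmx_act_shift _ x) AB // => c u v uv.
by apply: xinv; apply: ge_catr.
Qed.

End Generators.

Section NormalForms.
Variable n : nat.
Local Notation W := (word (sdgen n)).

Definition cancels (l m : sdgen n * bool) : bool :=
  match l, m with
  | (SX a, b), (SX c, d) => (a == c) && (b != d)
  | (SXi a, b), (SXi c, d) => (a == c) && (b != d)
  | _, _ => false
  end.

Definition free_reduce (w : W) : W :=
  foldr (fun l acc => if acc is m :: acc' then
                        if cancels l m then acc' else l :: acc
                      else [:: l]) [::] w.

Lemma cancelsP l m : cancels l m -> m = inv_letter l.
Proof.
by case: l m => [[a|a] b] [[c|c] d] //= /andP[/eqP <-]; case: b d => [] [].
Qed.

Lemma free_reduceP w : G_eq w (free_reduce w).
Proof.
elim: w => [|l w IH] /=; first exact: ge_refl.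
apply: ge_trans (ge_cons l IH) _.
case: (free_reduce w) => [|m w']; first exact: ge_refl.
case: ifP => [/cancelsP ->|_]; last exact: ge_refl.
exact: (ge_cancel_mid _ [::]).
Qed.

Definition is_x (l : sdgen n * bool) : bool := if l.1 is SX _ then true else false.

Definition phi_letter (a : pwgen n) (l : sdgen n * bool) : W :=
  match l with
  | (SX k, false) => phiw (val a).1 (val a).2 k
  | (SX k, true) => inv_word (phiw (val a).1 (val a).2 k)
  | _ => [:: l]
  end.

(* Pushes the letters xi^-1 to the right using xi^-1 x_k = phi(x_k) xi^-1;
   a letter xi stops the process. *)
Fixpoint push_xiV (w : W) : W * W :=
  if w is l :: w' then
    let p := push_xiV w' in
    match l with
    | (SX _, _) => (l :: p.1, p.2)
    | (SXi a, true) => (flatten (map (phi_letter a) p.1), l :: p.2)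
    | (SXi a, false) => ([::], l :: p.1 ++ p.2)
    end
  else ([::], [::]).

Definition sd_split (w : W) : W * W :=
  let p := push_xiV (free_reduce w) in (free_reduce p.1, p.2).

Lemma all_is_x_phi_letter a s : all is_x s -> all is_x (flatten (map (phi_letter a) s)).
Proof.
have phiw_x i j k : all is_x (phiw i j k) by rewrite /phiw; case: ifP.
elim: s => [|l s IH] //= /andP[xl /IH]; rewrite all_cat => ->; rewrite andbT.
case: l xl => -[k|?] [] //= _.
by rewrite /inv_word all_rev all_map; apply: sub_all (phiw_x _ _ _) => -[[]].
Qed.

Lemma all_is_x_push_xiV w : all is_x (push_xiV w).1.
Proof.
elim: w => [|[[k|a] [|]] w IH] //=; exact: all_is_x_phi_letter.
Qed.

Lemma xiV_x (a : pwgen n) k :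
  G_eq [:: (SXi a, true); (SX k, false)] (phiw (val a).1 (val a).2 k ++ [:: (SXi a, true)]).
Proof.
case: a => -[i j] ij /=; apply: ge_eq_mulV; apply: ge_rel; right.
by exists i, j, k; split; rewrite // (xiw_xi ij) inv_word_cat.
Qed.

Lemma xiV_xV (a : pwgen n) k :
  G_eq [:: (SXi a, true); (SX k, true)]
       (inv_word (phiw (val a).1 (val a).2 k) ++ [:: (SXi a, true)]).
Proof.
set xiV := (SXi a, true); set phi := phiw _ _ _.
have conj_inv : G_eq [:: (SX k, true); (SXi a, false)] ((SXi a, false) :: inv_word phi).
  by have := ge_inv (xiV_x a k); rewrite inv_word_cat.
apply: ge_trans (ge_sym (ge_cancel_mid _ [:: xiV; (SX k, true)] [::] (SXi a, false))) _.
apply: ge_trans (ge_ctx [:: xiV] [:: xiV] conj_inv) _.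
exact: (ge_cancel_mid _ [::] _ xiV).
Qed.

Lemma xiV_xs (a : pwgen n) (s : W) : all is_x s ->
  G_eq ((SXi a, true) :: s) (flatten (map (phi_letter a) s) ++ [:: (SXi a, true)]).
Proof.
elim: s => [|[[k|?] b] s IH] //=; first by move=> _; apply: ge_refl.
move=> /IH {}IH.
have step : G_eq [:: (SXi a, true); (SX k, b)] (phi_letter a (SX k, b) ++ [:: (SXi a, true)]).
  by case: b; [apply: xiV_xV | apply: xiV_x].
by apply: ge_trans (ge_catr s step) _; rewrite -!catA; apply: ge_catl.
Qed.

Lemma push_xiVP w : G_eq w ((push_xiV w).1 ++ (push_xiV w).2).
Proof.
elim: w => [|[[k|a] [|]] w IH] /=; first exact: ge_refl.
- exact: ge_cons.
- exact: ge_cons.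
- apply: ge_trans (ge_cons _ IH) _.
  by have := ge_catr (push_xiV w).2 (xiV_xs a (all_is_x_push_xiV w)); rewrite -catA.
- exact: ge_cons.
Qed.

Lemma sd_splitP w : G_eq w ((sd_split w).1 ++ (sd_split w).2).
Proof.
apply: ge_trans (free_reduceP w) _; apply: ge_trans (push_xiVP _) _.
exact: ge_catr (free_reduceP _).
Qed.

Definition eval_split (x : 'I_n -> W -> CC) c (p : W * W) := x c (p.1 ++ p.2).
(* Kept folded by [simpl], so that both parts stay visible. *)
Arguments eval_split : simpl never.

Section InvariantVector.
Variables (x : 'I_n -> W -> CC) (xinv : G_invariant_vec x).

Lemma eval_sd_split c w : x c w = eval_split x c (sd_split w).
Proof. by apply: xinv; apply: sd_splitP. Qed.

Lemma eval_split_eq c u z z' : G_eq z z' -> eval_split x c (u, z) = eval_split x c (u, z').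
Proof. by move=> zz'; apply: xinv; apply: ge_catl. Qed.

End InvariantVector.

End NormalForms.

(* The rules [neq] decide the comparisons of distinct indices met on the way. *)
Ltac compute_sd_split neq :=
  repeat progress
    rewrite /sd_split /free_reduce /phiw /inv_word /xw /inv_letter /= ?eqxx ?andbF ?neq.

Section Relations.
Variable n : nat.

Lemma lift_mccool (r : word (pwgen n)) : mccool_rel r -> G_eq (lift_pw r) [::].
Proof. by move=> hr; apply: ge_rel; left; exists r. Qed.

Lemma xiV_comm (a b : pwgen n) : mccool_rel (comm_word (gen_word a) (gen_word b)) ->
  G_eq [:: (SXi a, true); (SXi b, true)] [:: (SXi b, true); (SXi a, true)].
Proof. by move/lift_mccool => h; apply: ge_eq_mulV; exact: h. Qed.

Lemma xiV_comm_triangle (a b c : pwgen n) :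
  mccool_rel (comm_word (gen_word a ++ gen_word b) (gen_word c)) ->
  G_eq [:: (SXi c, true); (SXi b, true); (SXi a, true)]
       [:: (SXi b, true); (SXi a, true); (SXi c, true)].
Proof. by move/lift_mccool/ge_inv => h; apply: ge_eq_mulV; exact: h. Qed.

Lemma Cmx_comm_disjoint (i j s t : 'I_n) (ij : i != j) (st : s != t) :
  i != s -> i != t -> j != s -> j != t ->
  cmx_eq (cmx_mul (Cmx (xi ij)) (Cmx (xi st))) (cmx_mul (Cmx (xi st)) (Cmx (xi ij))).
Proof.
move=> i_s i_t j_s j_t.
have neq := (neq_eqF ij, neq_eqF st, neq_eqF i_s, neq_eqF i_t, neq_eqF j_s, neq_eqF j_t).
have rel : mccool_rel (comm_word (gen_word (xi st)) (gen_word (xi ij))).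
  left; exists s, t, i, j; rewrite -!xiw_xi; split=> //.
  by rewrite st ij !(eq_sym _ i) !(eq_sym _ j) i_s i_t j_s j_t.
apply: cmx_eq_at1 => x xinv r; rewrite !cmx_actM !cmx_act_Cmx.
have [ri|ri] := eqVneq r i; last have [rs|rs] := eqVneq r s.
all: try subst r.
all: rewrite ?eqxx ?neq !(eval_sd_split xinv); compute_sd_split neq.
all: rewrite !(eval_split_eq xinv _ _ (xiV_comm rel)); ring.
Qed.

Lemma Cmx_comm_target (i j k : 'I_n) (ij : i != j) (kj : k != j) : i != k ->
  cmx_eq (cmx_mul (Cmx (xi ij)) (Cmx (xi kj))) (cmx_mul (Cmx (xi kj)) (Cmx (xi ij))).
Proof.
move=> ik; have neq := (neq_eqF ij, neq_eqF kj, neq_eqF ik).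
have rel : mccool_rel (comm_word (gen_word (xi kj)) (gen_word (xi ij))).
  right; left; exists k, j, i; rewrite -!xiw_xi; split=> //.
  by rewrite kj eq_sym ij eq_sym ik.
apply: cmx_eq_at1 => x xinv r; rewrite !cmx_actM !cmx_act_Cmx.
have [ri|ri] := eqVneq r i; last have [rk|rk] := eqVneq r k.
all: try subst r.
all: rewrite ?eqxx ?neq !(eval_sd_split xinv); compute_sd_split neq.
all: rewrite !(eval_split_eq xinv _ _ (xiV_comm rel)); ring.
Qed.

Lemma Cmx_comm_triangle (i j k : 'I_n) (ij : i != j) (kj : k != j) (ik : i != k) :
  cmx_eq (cmx_mul (Cmx (xi ij)) (cmx_mul (Cmx (xi kj)) (Cmx (xi ik))))
         (cmx_mul (Cmx (xi ik)) (cmx_mul (Cmx (xi ij)) (Cmx (xi kj)))).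
Proof.
have neq := (neq_eqF ij, neq_eqF kj, neq_eqF ik).
have rel : mccool_rel (comm_word (gen_word (xi ij) ++ gen_word (xi kj)) (gen_word (xi ik))).
  right; right; exists i, j, k; rewrite -!xiw_xi; split=> //.
  by rewrite ij eq_sym kj ik.
apply: cmx_eq_at1 => x xinv r; rewrite !cmx_actM !cmx_act_Cmx.
have [ri|ri] := eqVneq r i; last have [rk|rk] := eqVneq r k.
all: try subst r.
all: rewrite ?eqxx ?neq !(eval_sd_split xinv); compute_sd_split neq.
all: rewrite !(eval_split_eq xinv _ _ (xiV_comm_triangle rel)); ring.
Qed.

Lemma Cmx_mulV (i j : 'I_n) (ij : i != j) :
  cmx_eq (cmx_mul (Cmx (xi ij)) (Cmx_inv ij)) (cmx_one n).
Proof.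
have neq := neq_eqF ij.
apply: cmx_eq_at1 => x xinv r; rewrite cmx_actM cmx_act1 !cmx_act_Cmx !cmx_act_Cmx_inv.
have [ri|ri] := eqVneq r i; first subst r.
all: rewrite ?eqxx ?neq !(eval_sd_split xinv); compute_sd_split neq; ring.
Qed.

Lemma Cmx_Vmul (i j : 'I_n) (ij : i != j) :
  cmx_eq (cmx_mul (Cmx_inv ij) (Cmx (xi ij))) (cmx_one n).
Proof.
have neq := neq_eqF ij.
apply: cmx_eq_at1 => x xinv r; rewrite cmx_actM cmx_act1 !cmx_act_Cmx_inv !cmx_act_Cmx.
have [ri|ri] := eqVneq r i; first subst r.
all: rewrite ?eqxx ?neq !(eval_sd_split xinv); compute_sd_split neq; ring.
Qed.

End Relations.

Section Projection.
Variable n : nat.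
Local Notation W := (word (sdgen n)).

Definition proj_letter (l : sdgen n * bool) : word (pwgen n) :=
  if l.1 is SXi a then [:: (a, l.2)] else [::].

Definition proj_pw (w : W) : word (pwgen n) := flatten (map proj_letter w).

Lemma proj_pw_cat u v : proj_pw (u ++ v) = proj_pw u ++ proj_pw v.
Proof. by rewrite /proj_pw map_cat flatten_cat. Qed.

Lemma proj_pw_inv w : proj_pw (inv_word w) = inv_word (proj_pw w).
Proof.
elim: w => [|l w IH] //; rewrite inv_word_cons proj_pw_cat IH.
by rewrite -cat1s proj_pw_cat inv_word_cat; case: l => -[].
Qed.

Lemma proj_pw_lift w : proj_pw (lift_pw w) = w.
Proof. by elim: w => [|[a b] w IH] //; rewrite /proj_pw /= in IH *; rewrite IH. Qed.

Lemma proj_pw_phiw (i j k : 'I_n) : proj_pw (phiw i j k) = [::].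
Proof. by rewrite /phiw; case: ifP. Qed.

Lemma G_eq_proj u v : G_eq u v -> PW_eq (proj_pw u) (proj_pw v).
Proof.
elim=> {u v} [w | u v _ | u v w _ h1 _ h2 | a b u v _ h | [[k|a] b] | r].
- exact: ge_refl.
- exact: ge_sym.
- exact: ge_trans h1 h2.
- by rewrite !proj_pw_cat; apply: ge_catl; apply: ge_catr.
- exact: ge_refl.
- exact: (ge_cancel _ (a, b)).
case=> [[r0 [r0_rel ->]] | [i [j [k [_ ->]]]]].
  by rewrite proj_pw_lift; apply: ge_rel.
by rewrite !proj_pw_cat !proj_pw_inv proj_pw_lift proj_pw_phiw /= cats0; apply: ge_Vmul.
Qed.

Definition PW_invariant (f : W -> CC) :=
  forall u v, PW_eq (proj_pw u) (proj_pw v) -> f u = f v.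

Lemma PW_invariant_G f : PW_invariant f -> G_invariant f.
Proof. by move=> finv u v /G_eq_proj; apply: finv. Qed.

Lemma PW_invariant_cons l f : PW_invariant f -> PW_invariant (fun w => f (l :: w)).
Proof. by move=> finv u v uv; apply: finv; rewrite /proj_pw /=; apply: ge_catl. Qed.

Lemma PW_invariant_cat w f : PW_invariant f -> PW_invariant (fun u => f (w ++ u)).
Proof. by move=> finv u v uv; apply: finv; rewrite !proj_pw_cat; apply: ge_catl. Qed.

Lemma cmx_act_Cmx_PW (g : pwgen n) y r h : (forall c, PW_invariant (y c)) ->
  cmx_act (Cmx g) y r h = y r ((SXi g, true) :: h).
Proof.
case: g => -[i j] ij yinv; rewrite (cmx_act_Cmx ij); case: eqVneq => [->|//].
set h' := (SXi (xi ij), true) :: h.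
have -> : y i ((SX j, true) :: h') = y i h' by apply: yinv; apply: ge_refl.
have -> : y j [:: (SX j, false), (SX i, true), (SX j, true) & h'] = y j h'.
  by apply: yinv; apply: ge_refl.
by rewrite addrK.
Qed.

End Projection.

Section Representation.
Variables (n : nat) (Dinv : pwgen n -> cmx n).
Hypothesis Dinv_inverse : forall g : pwgen n,
  cmx_eq (cmx_mul (Cmx g) (Dinv g)) (cmx_one n) /\
  cmx_eq (cmx_mul (Dinv g) (Cmx g)) (cmx_one n).
Local Notation Psi := (Psi_word Dinv).

Lemma cmx_act_CmxK g x : G_invariant_vec x -> cmx_act (Cmx g) (cmx_act (Dinv g) x) = x.
Proof. by move=> xinv; rewrite -cmx_actM ((cmx_eqP _ _).1 (Dinv_inverse g).1) // cmx_act1. Qed.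

Lemma cmx_act_DinvK g x : G_invariant_vec x -> cmx_act (Dinv g) (cmx_act (Cmx g) x) = x.
Proof. by move=> xinv; rewrite -cmx_actM ((cmx_eqP _ _).1 (Dinv_inverse g).2) // cmx_act1. Qed.

Lemma cmx_act_Dinv_PW g y r h : (forall c, PW_invariant (y c)) ->
  cmx_act (Dinv g) y r h = y r ((SXi g, false) :: h).
Proof.
move=> yinv; pose z c w := y c ((SXi g, false) :: w).
have zinv c : PW_invariant (z c) by apply: PW_invariant_cons.
have yCz : y = cmx_act (Cmx g) z.
  apply/funext => c; apply/funext => w; rewrite cmx_act_Cmx_PW //.
  by symmetry; apply: yinv; exact: (ge_cancel_mid _ [::] _ (g, false)).
by rewrite {1}yCz cmx_act_DinvK // => c; apply: PW_invariant_G.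
Qed.

Lemma cmx_act_Psi_PW u y r h : (forall c, PW_invariant (y c)) ->
  cmx_act (Psi u) y r h = y r (inv_word (lift_pw u) ++ h).
Proof.
elim: u y r h => [|[a b] u IH] y r h yinv /=; first by rewrite cmx_act1.
rewrite cmx_actM (eq_cmx_act _ (fun c w => IH y c w yinv)) inv_word_cons -catA.
have yuinv c : PW_invariant (fun w => y c (inv_word (lift_pw u) ++ w)).
  exact: PW_invariant_cat.
by case: b; [rewrite cmx_act_Dinv_PW | rewrite cmx_act_Cmx_PW].
Qed.

Lemma cmx_act_Psi_cat a b x : cmx_act (Psi (a ++ b)) x = cmx_act (Psi a) (cmx_act (Psi b) x).
Proof. by elim: a => [|l a IH] /=; rewrite ?cmx_act1 // !cmx_actM IH. Qed.

Lemma cmx_act_Psi_comm (a b : pwgen n) x : G_invariant_vec x ->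
  cmx_eq (cmx_mul (Cmx a) (Cmx b)) (cmx_mul (Cmx b) (Cmx a)) ->
  cmx_act (Psi (comm_word (gen_word a) (gen_word b))) x = x.
Proof.
move=> xinv /cmx_eqP/(_ x xinv); rewrite !cmx_actM /= cmx_act1 => ab_ba.
by rewrite ab_ba cmx_act_DinvK ?cmx_act_DinvK //; apply: cmx_act_invariant.
Qed.

Lemma cmx_act_Psi_comm_triangle (a b c : pwgen n) x : G_invariant_vec x ->
  cmx_eq (cmx_mul (Cmx a) (cmx_mul (Cmx b) (Cmx c)))
         (cmx_mul (Cmx c) (cmx_mul (Cmx a) (Cmx b))) ->
  cmx_act (Psi (comm_word (gen_word a ++ gen_word b) (gen_word c))) x = x.
Proof.
move=> xinv /cmx_eqP/(_ x xinv); rewrite !cmx_actM /= cmx_act1 => abc_cab.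
by rewrite abc_cab !cmx_act_DinvK //; do ?apply: cmx_act_invariant.
Qed.

Lemma cmx_act_Psi_PW_eq u v x : PW_eq u v -> G_invariant_vec x ->
  cmx_act (Psi u) x = cmx_act (Psi v) x.
Proof.
move=> uv; elim: uv x => {u v} [w | u v _ IH | u v w _ IH1 _ IH2 | a b u v _ IH | [g []] | r].
- by [].
- by move=> x xinv; rewrite IH.
- by move=> x xinv; rewrite IH1 // IH2.
- move=> x xinv; rewrite !cmx_act_Psi_cat IH //; exact: cmx_act_invariant.
- by move=> x xinv; rewrite /= !cmx_actM cmx_act1 cmx_act_DinvK.
- by move=> x xinv; rewrite /= !cmx_actM cmx_act1 cmx_act_CmxK.
move=> rel x xinv; rewrite /= cmx_act1.
case: rel => [[i [j [s [t [/and5P[ij st i_s i_t /andP[j_s j_t]] ->]]]]] |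
             [[i [j [k [/and3P[ij jk ik] ->]]]] | [i [j [k [/and3P[ij jk ik] ->]]]]]].
- by rewrite (xiw_xi ij) (xiw_xi st) cmx_act_Psi_comm //; apply: Cmx_comm_disjoint.
- have kj : k != j by rewrite eq_sym.
  by rewrite (xiw_xi ij) (xiw_xi kj) cmx_act_Psi_comm //; apply: Cmx_comm_target.
- have kj : k != j by rewrite eq_sym.
  rewrite (xiw_xi ij) (xiw_xi kj) (xiw_xi ik) cmx_act_Psi_comm_triangle //.
  exact: Cmx_comm_triangle.
Qed.

Lemma Psi_word_inj u v : (0 < n)%N -> cmx_eq (Psi u) (Psi v) -> PW_eq u v.
Proof.
move=> n_gt0 /cmx_eqP uv.
pose y (c : 'I_n) w : CC := if `[< PW_eq (proj_pw w) (inv_word u) >] then 1 else 0.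
have yinv c : PW_invariant (y c).
  move=> w1 w2 w12; rewrite /y; congr (if _ then _ else _).
  by apply/asboolP/asboolP => h; [apply: ge_trans (ge_sym w12) h | apply: ge_trans w12 h].
have := congr1 (fun f => f (Ordinal n_gt0) [::]) (uv y (fun c => PW_invariant_G (yinv c))).
rewrite /= !cmx_act_Psi_PW // !cats0 /y !proj_pw_inv !proj_pw_lift.
rewrite asboolT; last exact: ge_refl.
case: asboolP => [vu _ | _ /eqP]; last by rewrite oner_eq0.
exact/ge_invI/ge_sym.
Qed.

End Representation.

Local Close Scope ring_scope.

Theorem theorem3p3 (n : nat) (hn : 2 <= n) :
  (forall g : pwgen n, exists D : cmx n,
      cmx_eq (cmx_mul (Cmx g) D) (cmx_one n) /\
      cmx_eq (cmx_mul D (Cmx g)) (cmx_one n)) /\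
  (forall Dinv : pwgen n -> cmx n,
      (forall g : pwgen n,
          cmx_eq (cmx_mul (Cmx g) (Dinv g)) (cmx_one n) /\
          cmx_eq (cmx_mul (Dinv g) (Cmx g)) (cmx_one n)) ->
      forall u v : word (pwgen n),
        PW_eq u v <-> cmx_eq (Psi_word Dinv u) (Psi_word Dinv v)).
Proof.
split=> [[[i j] ij] | Dinv Dinv_inverse u v].
  by exists (Cmx_inv ij); split; [apply: Cmx_mulV | apply: Cmx_Vmul].
split=> [uv | ]; last by apply: Psi_word_inj => //; apply: ltnW.
by apply/cmx_eqP => x xinv; apply: cmx_act_Psi_PW_eq.
Qed.
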